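(* Let $K=\{k_0,k_1,\dots,k_n\}$ be a finite set of alternatives, $K_*=K\setminus\{k_0\}$, $T_1=\{t_1^a,t_1^b\}$, $T_2$ a finite set, $T=T_1\times T_2$, and $\lambda$ a probability measure on $T$ with $\lambda(t)>0$ for all $t$, equal to the product of its marginals $\lambda_1,\lambda_2$. Let real numbers $Q_i^k(t_i)$ ($k\in K_*$) be given, put $Q_i^{k_0}(t_i)=1-\sum_{k\in K_*}Q_i^k(t_i)$, $h_i^k(t_i)=Q_i^k(t_i)\lambda_i(t_i)$ for all $k\in K$, and assume $\sum_{t_1\in T_1}h_1^k(t_1)=\sum_{t_2\in T_2}h_2^k(t_2)$ for all $k\in K_*$. Let $P_{\mathcal I}$ denote the system: $x^k:T\to\mathbb{R}_{\ge 0}$ ($k\in K$) with $\sum_{t_{-i}}x^k(t)=h_i^k(t_i)$ for all $k\in K_*$, $t_i\in T_i$, $i=1,2$, and $\sum_{k\in K}x^k(t)=\lambda(t)$ for all $t\in T$. Let $P(t_1^a)$ denote the system: $x^k:T\to\mathbb{R}_{\ge0}$ ($k\in K$) with $$\sum_{t_{-i}\in T_{-i}}x^k(t)=h_i^k(t_i)\ \text{ for all }(k,t_i)\in K\times\big(T_2\cup\{t_1^b\}\big),\qquad \sum_{k\in K}x^k(t_1^a,t_2)=\lambda(t_1^a,t_2)\ \text{ for all }t_2\in T_2.$$ Then: (1) $P_{\mathcal I}$ has a feasible solution if and only if $P(t_1^a)$ has a feasible solution. (2) $P(t_1^a)$ is a network flow problem on the bipartite graph with supply nodes $V_1=K\times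 T_2$ and demand nodes $V_2=(K\times\{t_1^b\})\cup(\{t_1^a\}\times T_2)$, with an arc from each $(k,t_2)$ to $(k,t_1^b)$ (carrying flow $x^k(t_1^b,t_2)$) and an arc from each $(k,t_2)$ to $(t_1^a,t_2)$ (carrying flow $x^k(t_1^a,t_2)$), supply $h_2^k(t_2)$ at $(k,t_2)$, demand $h_1^k(t_1^b)$ at $(k,t_1^b)$ and demand $\lambda(t_1^a,t_2)$ at $(t_1^a,t_2)$: $P(t_1^a)$ has a feasible solution if and only if there is a non-negative flow on these arcs whose total outflow at each supply node equals its supply and whose total inflow at each demand node equals its demand.
   Context: Here $-i$ denotes the player other than $i$ and $t=(t_i,t_{-i})$. *)

From mathcomp Require Import all_boot all_order all_algebra.
Set Implicit Arguments. Unset Strict Implicit. Unset Printing Implicit Defensive.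
Import Order.TTheory GRing.Theory Num.Theory.
Local Open Scope ring_scope.

Section Defs.
Variables (R : realFieldType) (K T1 T2 : finType).

Definition marg1 (lam : T1 -> T2 -> R) (t1 : T1) : R := \sum_(t2 : T2) lam t1 t2.
Definition marg2 (lam : T1 -> T2 -> R) (t2 : T2) : R := \sum_(t1 : T1) lam t1 t2.

Definition Qext {Ti : finType} (k0 : K) (Q : K -> Ti -> R) (k : K) (t : Ti) : R :=
  if k == k0 then 1 - \sum_(k' | k' != k0) Q k' t else Q k t.

Definition h1 (k0 : K) (Q1 : K -> T1 -> R) (lam : T1 -> T2 -> R) (k : K) (t1 : T1) : R :=
  Qext k0 Q1 k t1 * marg1 lam t1.
Definition h2 (k0 : K) (Q2 : K -> T2 -> R) (lam : T1 -> T2 -> R) (k : K) (t2 : T2) : R :=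
  Qext k0 Q2 k t2 * marg2 lam t2.

Definition PI_feasible (k0 : K) (Q1 : K -> T1 -> R) (Q2 : K -> T2 -> R)
    (lam : T1 -> T2 -> R) : Prop :=
  exists x : K -> T1 -> T2 -> R,
    [/\ forall k t1 t2, 0 <= x k t1 t2,
        forall k, k != k0 -> forall t1, \sum_(t2 : T2) x k t1 t2 = h1 k0 Q1 lam k t1,
        forall k, k != k0 -> forall t2, \sum_(t1 : T1) x k t1 t2 = h2 k0 Q2 lam k t2
      & forall t1 t2, \sum_(k : K) x k t1 t2 = lam t1 t2].

Definition Pa_feasible (k0 : K) (Q1 : K -> T1 -> R) (Q2 : K -> T2 -> R)
    (lam : T1 -> T2 -> R) (ta tb : T1) : Prop :=
  exists x : K -> T1 -> T2 -> R,
    [/\ forall k t1 t2, 0 <= x k t1 t2,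
        forall k t2, \sum_(t1 : T1) x k t1 t2 = h2 k0 Q2 lam k t2,
        forall k, \sum_(t2 : T2) x k tb t2 = h1 k0 Q1 lam k tb
      & forall t2, \sum_(k : K) x k ta t2 = lam ta t2].

(* Network flow on the bipartite graph: supply nodes (k,t2), demand nodes
   (k,tb) and (ta,t2); fb k t2 = flow on arc (k,t2)->(k,tb),
   fa k t2 = flow on arc (k,t2)->(ta,t2). *)
Definition flow_feasible (k0 : K) (Q1 : K -> T1 -> R) (Q2 : K -> T2 -> R)
    (lam : T1 -> T2 -> R) (ta tb : T1) : Prop :=
  exists fa fb : K -> T2 -> R,
    [/\ forall k t2, 0 <= fa k t2 /\ 0 <= fb k t2,
        forall k t2, fb k t2 + fa k t2 = h2 k0 Q2 lam k t2,
        forall k, \sum_(t2 : T2) fb k t2 = h1 k0 Q1 lam k tb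
      & forall t2, \sum_(k : K) fa k t2 = lam ta t2].

End Defs.

From mathcomp Require Import all_boot all_order all_algebra.
Import Order.TTheory GRing.Theory Num.Theory.
Local Open Scope ring_scope.

(* Since the Q^k sum to 1 over K, summing h_i^k over k gives the marginal
   lambda_i, so in either system the constraints for one index are implied
   by the others: the k0-constraints of P_I follow from those for K_* and the
   lambda-constraints, while the t1^a-constraints and the lambda-constraints
   at t1^b, dropped in P(t1^a), are recovered by subtracting the t1^b terms
   from a total (using the consistency of the h_i^k).  Since T1 has two
   elements, a solution of P(t1^a) is just the pair of flows x^k(t1^a, .)
   and x^k(t1^b, .) on the arcs of the bipartite network. *)

Lemma eq_term_of_sum (V : zmodType) (I : finType) (i0 : I) (F G : I -> V) :
  \sum_i F i = \sum_i G i -> (forall i, i != i0 -> F i = G i) -> F i0 = G i0.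
Proof.
rewrite (bigD1 i0) // [RHS](bigD1 i0) //= => eqFG eqF'G'.
by move: eqFG; rewrite (eq_bigr _ eqF'G') => /addIr.
Qed.

Arguments eq_term_of_sum {V I i0} F G.

Lemma sum_over_pair (V : nmodType) (I : finType) (a b : I) (F : I -> V) :
  a != b -> (forall i, i = a \/ i = b) -> \sum_i F i = F a + F b.
Proof.
move=> neq_ab Iab; rewrite (bigD1 a) // (bigD1 b) 1?eq_sym //= big1 ?addr0 //.
by move=> i /andP[]; case: (Iab i) => ->; rewrite eqxx.
Qed.

Arguments sum_over_pair {V I a b} F.

Lemma sum_Qext (R : realFieldType) (K Ti : finType) (k0 : K) (Q : K -> Ti -> R)
    (t : Ti) :
  \sum_k Qext k0 Q k t = 1.
Proof.
rewrite (bigD1 k0) //= /Qext eqxx.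
by rewrite (eq_bigr (fun k => Q k t)) ?subrK // => k /negbTE ->.
Qed.

Section Feasibility.
Variables (R : realFieldType) (K T1 T2 : finType) (k0 : K) (ta tb : T1).
Variables (lam : T1 -> T2 -> R) (Q1 : K -> T1 -> R) (Q2 : K -> T2 -> R).

Lemma sum_h1 (t1 : T1) : \sum_k h1 k0 Q1 lam k t1 = marg1 lam t1.
Proof. by rewrite /h1 -big_distrl /= sum_Qext mul1r. Qed.

Lemma sum_h2 (t2 : T2) : \sum_k h2 k0 Q2 lam k t2 = marg2 lam t2.
Proof. by rewrite /h2 -big_distrl /= sum_Qext mul1r. Qed.

Lemma PI_Pa_feasible : PI_feasible k0 Q1 Q2 lam -> Pa_feasible k0 Q1 Q2 lam ta tb.
Proof.
case=> x [x_ge0 row_x col_x lam_x]; exists x; split=> // [k t2|k].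
- have [-> | nk0] := eqVneq k k0; last exact: col_x.
  apply: (eq_term_of_sum (fun k => \sum_t1 x k t1 t2) (h2 k0 Q2 lam ^~ t2))
    => [|k' nk0].
    by rewrite sum_h2 exchange_big; apply: eq_bigr => t1 _; apply: lam_x.
  exact: col_x.
- have [-> | nk0] := eqVneq k k0; last exact: row_x.
  apply: (eq_term_of_sum (fun k => \sum_t2 x k tb t2) (h1 k0 Q1 lam ^~ tb))
    => [|k' nk0].
    by rewrite sum_h1 exchange_big; apply: eq_bigr => t2 _; apply: lam_x.
  exact: row_x.
Qed.

Hypothesis T1_ab : forall t1 : T1, t1 = ta \/ t1 = tb.
Hypothesis h_consistent :
  forall k, k != k0 -> \sum_t1 h1 k0 Q1 lam k t1 = \sum_t2 h2 k0 Q2 lam k t2.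

Lemma Pa_PI_feasible : Pa_feasible k0 Q1 Q2 lam ta tb -> PI_feasible k0 Q1 Q2 lam.
Proof.
have other_a t1 : t1 != ta -> t1 = tb by case: (T1_ab t1) => ->; rewrite ?eqxx.
have other_b t1 : t1 != tb -> t1 = ta by case: (T1_ab t1) => ->; rewrite ?eqxx.
case=> x [x_ge0 col_x row_b lam_a]; exists x; split=> // [k nk0 t1|t1 t2].
- have [-> {t1} | /other_a ->] := eqVneq t1 ta; last exact: row_b.
  apply: (eq_term_of_sum (fun t1 => \sum_t2 x k t1 t2) (h1 k0 Q1 lam k))
    => [|t1 /other_a ->].
    by rewrite h_consistent // exchange_big; apply: eq_bigr => t2 _; apply: col_x.
  exact: row_b.
- have [-> {t1} | /other_b ->] := eqVneq t1 tb; last exact: lam_a.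
  apply: (eq_term_of_sum (fun t1 => \sum_k x k t1 t2) (lam^~ t2))
    => [|t1 /other_b ->].
    rewrite exchange_big -[RHS]/(marg2 lam t2) -sum_h2.
    by apply: eq_bigr => k _; apply: col_x.
  exact: lam_a.
Qed.

Hypothesis neq_ab : ta != tb.

Lemma Pa_flow_feasible :
  Pa_feasible k0 Q1 Q2 lam ta tb -> flow_feasible k0 Q1 Q2 lam ta tb.
Proof.
case=> x [x_ge0 col_x row_b lam_a].
exists (fun k => x k ta), (fun k => x k tb); split=> // k t2.
by rewrite -col_x (sum_over_pair _ neq_ab T1_ab) addrC.
Qed.

Lemma flow_Pa_feasible :
  flow_feasible k0 Q1 Q2 lam ta tb -> Pa_feasible k0 Q1 Q2 lam ta tb.
Proof.
have [neq_ba eq_aa] : (tb == ta) = false /\ ta == ta by rewrite eq_sym (negbTE neq_ab).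
case=> fa [fb [f_ge0 supply demand_b demand_a]].
exists (fun k t1 => if t1 == ta then fa k else fb k); split.
- by move=> k t1 t2; case: (t1 == ta); case: (f_ge0 k t2).
- by move=> k t2; rewrite (sum_over_pair _ neq_ab T1_ab) eq_aa neq_ba addrC.
- by move=> k; rewrite neq_ba.
- by move=> t2; rewrite eq_aa.
Qed.

End Feasibility.

Theorem lemma7 (R : realFieldType) (K T1 T2 : finType) (k0 : K) (ta tb : T1)
    (lam : T1 -> T2 -> R) (Q1 : K -> T1 -> R) (Q2 : K -> T2 -> R) :
  ta != tb ->
  (forall t1 : T1, t1 = ta \/ t1 = tb) ->
  (forall t1 t2, 0 < lam t1 t2) ->
  \sum_(t1 : T1) \sum_(t2 : T2) lam t1 t2 = 1 ->
  (forall t1 t2, lam t1 t2 = marg1 lam t1 * marg2 lam t2) ->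
  (forall k, k != k0 ->
     \sum_(t1 : T1) h1 k0 Q1 lam k t1 = \sum_(t2 : T2) h2 k0 Q2 lam k t2) ->
  (PI_feasible k0 Q1 Q2 lam <-> Pa_feasible k0 Q1 Q2 lam ta tb) /\
  (Pa_feasible k0 Q1 Q2 lam ta tb <-> flow_feasible k0 Q1 Q2 lam ta tb).
Proof.
move=> neq_ab T1_ab _ _ _ h_consistent; split; split.
- exact: PI_Pa_feasible.
- exact: Pa_PI_feasible.
- exact: Pa_flow_feasible.
- exact: flow_Pa_feasible.
Qed.
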